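(* Let $L\ge 2$ and let $S=(d,N_1,\dots,N_{L-1},1)$ be a neural network architecture. Let $\varrho:\mathbb{R}\to\mathbb{R}$ satisfy: (i) $\varrho$ is continuous and increasing; (ii) there is $x_0\in\mathbb{R}$ such that $\varrho$ is differentiable at $x_0$ with $\varrho'(x_0)\ne 0$; (iii) there is $r>0$ such that $\varrho|_{(-\infty,-r)\cup(r,\infty)}$ is differentiable; (iv) at least one of: (a) there are $\lambda,\lambda'\ge 0$ with $\lambda\ne\lambda'$ such that $\varrho'(x)\to\lambda$ as $x\to\infty$ and $\varrho'(x)\to\lambda'$ as $x\to-\infty$, and $N_{L-1}\ge 2$; or (b) $\varrho$ is bounded. Let $B>0$ and let $\mu$ be a finite Borel measure on $[-B,B]^d$ whose support $\operatorname{supp}\mu$ is uncountable. Then $\mathcal{RNN}_\varrho^{[-B,B]^d}(S)$ is not closed in $L^p(\mu)$ for any $p\in(0,\infty)$. More precisely, there is $f\in L^\infty(\mu)$ such that, for every $p\in(0,\infty)$, $f$ belongs to the closure of $\mathcal{RNN}_\varrho^{[-B,B]^d}(S)$ in $L^p(\mu)$ but $f\notin\mathcal{RNN}_\varrho^{[-B,B]^d}(S)$.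
   Context: A neural network with architecture $S=(N_0,\dots,N_L)$ ($N_0=d$) is a family $\Phi=((A_\ell,b_\ell))_{\ell=1}^L$, $A_\ell\in\mathbb{R}^{N_\ell\times N_{\ell-1}}$, $b_\ell\in\mathbb{R}^{N_\ell}$; $\mathcal{NN}(S)$ is the set of these. For $\varrho:\mathbb{R}\to\mathbb{R}$ and $\Omega\subset\mathbb{R}^d$, $\mathrm{R}_\varrho^\Omega(\Phi):\Omega\to\mathbb{R}^{N_L}$, $x\mapsto x_L$, where $x_0=x$, $x_\ell=\varrho(A_\ell x_{\ell-1}+b_\ell)$ for $1\le\ell\le L-1$ (componentwise), $x_L=A_Lx_{L-1}+b_L$; $\mathcal{RNN}_\varrho^\Omega(S)=\{\mathrm{R}_\varrho^\Omega(\Phi):\Phi\in\mathcal{NN}(S)\}$, regarded as a subset of $L^p(\mu)$ (functions identified $\mu$-a.e.). *)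

From HB Require Import structures.
From mathcomp Require Import all_boot all_order all_algebra.
From mathcomp Require Import all_classical all_reals all_analysis.
Set Implicit Arguments. Unset Strict Implicit. Unset Printing Implicit Defensive.
Import Order.TTheory GRing.Theory Num.Theory.
Import numFieldNormedType.Exports.
Local Open Scope classical_set_scope.
Local Open Scope ring_scope.

Definition Rd (R : realType) (d : nat) :=
  g_sigma_algebraType (@open 'cV[R]_d).

(* A network with architecture (N 0, N 1, ..., N (L-1), 1):
   hidden layers l = 1 .. L-1 have weights A (l-1) : 'M_(N l, N (l-1)) and
   biases b (l-1) : 'cV_(N l); the output layer L has weights
   Aout : 'M_(1, N (L-1)) and bias bout : R.
   (Components A l, b l with l >= L-1 are never used.) *)
Record NN (R : realType) (N : nat -> nat) (L : nat) := mkNN {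
  nn_A : forall l : nat, 'M[R]_(N l.+1, N l);
  nn_b : forall l : nat, 'cV[R]_(N l.+1);
  nn_Aout : 'M[R]_(1, N L.-1);
  nn_bout : R }.

Fixpoint nn_hidden (R : realType) (N : nat -> nat) (L : nat)
  (rho : R -> R) (Phi : NN R N L) (x : 'cV[R]_(N 0%N)) (l : nat) : 'cV[R]_(N l) :=
  match l return 'cV[R]_(N l) with
  | 0 => x
  | l'.+1 => map_mx rho (nn_A Phi l' *m nn_hidden rho Phi x l' + nn_b Phi l')
  end.

Definition realization (R : realType) (N : nat -> nat) (L : nat)
  (rho : R -> R) (Phi : NN R N L) (x : 'cV[R]_(N 0%N)) : R :=
  (nn_Aout Phi *m nn_hidden rho Phi x L.-1) ord0 ord0 + nn_bout Phi.

Definition cube (R : realType) (d : nat) (B : R) : set 'cV[R]_d :=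
  [set x | forall i : 'I_d, `|x i ord0| <= B].

Definition msupport (R : realType) (d : nat)
  (mu : {measure set (Rd R d) -> \bar R}) : set 'cV[R]_d :=
  [set x | forall U : set 'cV[R]_d, open U -> U x -> (0 < mu U)%E].

Definition in_Linfty (R : realType) (d : nat)
  (mu : {measure set (Rd R d) -> \bar R}) (f : Rd R d -> R) : Prop :=
  measurable_fun setT f /\ exists M : R, {ae mu, forall x, `|f x| <= M}.

(* f lies in the L^p(mu)-closure of the set of realizations:
   some sequence of realizations converges to f in L^p(mu), i.e.
   \int |g_n - f|^p dmu -> 0 (for 0 < p this is the (quasi-)metric of L^p). *)
Definition in_Lp_closure_RNN (R : realType) (N : nat -> nat) (L : nat)
  (rho : R -> R) (mu : {measure set (Rd R (N 0%N)) -> \bar R})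
  (p : R) (f : Rd R (N 0%N) -> R) : Prop :=
  exists Phi : nat -> NN R N L,
    (fun n => (\int[mu]_x (`|realization rho (Phi n) x - f x| `^ p)%:E)%E)
      @ \oo --> 0%E.

(* f (as an element of L^p(mu)) is a realization: equal mu-a.e. to one *)
Definition in_RNN (R : realType) (N : nat -> nat) (L : nat)
  (rho : R -> R) (mu : {measure set (Rd R (N 0%N)) -> \bar R})
  (f : Rd R (N 0%N) -> R) : Prop :=
  exists Phi : NN R N L, {ae mu, forall x, f x = realization rho Phi x}.

From HB Require Import structures.
From mathcomp Require Import all_boot all_order all_algebra.
From mathcomp Require Import all_classical all_reals all_analysis.
From mathcomp Require Import lra.
Import Order.TTheory GRing.Theory Num.Theory.
Import numFieldNormedType.Exports.
Local Open Scope classical_set_scope.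
Local Open Scope ring_scope.
Set Implicit Arguments.
Unset Strict Implicit.
Unset Printing Implicit Defensive.

(* Because supp mu is uncountable, it has a point p and a coordinate i at which
   it accumulates on both sides of the hyperplane {x_i = p_i}; otherwise every
   point of the support would be determined by a rational grid cell together
   with the directions in which it is extremal in that cell.
   Since rho is strictly increasing through x0, layers computing
   rho (s - threshold + x0) pass the sign of x_i - p_i on to the last hidden
   layer, which scales it by n.  The output is then H (n t(x)), where t(x) has
   the sign of x_i - p_i and H is bounded with distinct limits at +oo and -oo:
   H = rho in case (b), and H v = rho (v + 1) - rho v in case (a), whose limits
   are those of rho' by the mean value theorem.  By dominated convergence the
   realizations converge in every L^p(mu) to a function jumping across the
   hyperplane, and the choice of p forbids it to agree a.e. with any
   continuous function, such as a realization. *)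

Section StrictAtNonzeroDerivative.
Variable R : realType.

Lemma derive1_eq0_eventually_const (f : R -> R) (x : R) (F : set_system R)
    {PF : ProperFilter F} :
  F `=>` 0^' -> derivable f x 1 -> (\forall h \near F, f (h + x) = f x) ->
  derive1 f x = 0.
Proof.
move=> F0 df fcst; rewrite derive1E.
have dq : (fun h => h^-1 *: (f (h *: 1 + x) - f x)) @ F --> 'D_1 f x.
  exact: cvg_trans (cvg_app _ F0) df.
have dq0 : (fun h => h^-1 *: (f (h *: 1 + x) - f x)) @ F --> 0.
  apply: cvg_near_cst; apply: filterS fcst => h fh.
  by rewrite scaler1 fh subrr scaler0.
by rewrite -(cvg_lim (@Rhausdorff R) dq) (cvg_lim (@Rhausdorff R) dq0).
Qed.

Lemma at_left_dnbhs (a : R) : a^'- `=>` a^'.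
Proof.
by move=> A [e e0 Ae]; exists e => // y ay ya; apply: Ae; rewrite ?lt_eqF.
Qed.

Lemma at_right_dnbhs (a : R) : a^'+ `=>` a^'.
Proof.
by move=> A [e e0 Ae]; exists e => // y ay ya; apply: Ae; rewrite ?gt_eqF.
Qed.

Definition strict_at (f : R -> R) (x : R) :=
  (forall y, y < x -> f y < f x) /\ (forall y, x < y -> f x < f y).

Lemma nondecreasing_strict_at (f : R -> R) (x : R) :
  {homo f : y z / y <= z} -> derivable f x 1 -> derive1 f x != 0 ->
  strict_at f x.
Proof.
move=> mon df /eqP f'x0; split=> y yx; rewrite ltNge; apply/negP => fyx;
  apply: f'x0.
- apply: (derive1_eq0_eventually_const (@at_left_dnbhs 0)) => //.
  near=> h; apply/eqP; rewrite eq_le mon ?gerDr /=; last first.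
    by near: h; exact: nbhs_left_le.
  apply: (le_trans fyx); apply: mon.
  suff : y - x <= h by lra.
  by near: h; apply: nbhs_left_ge; rewrite subr_lt0.
- apply: (derive1_eq0_eventually_const (@at_right_dnbhs 0)) => //.
  near=> h; apply/eqP; rewrite eq_le [f x <= _]mon ?lerDr ?andbT; last first.
    by near: h; exact: nbhs_right_ge.
  apply: le_trans fyx; apply: mon.
  suff : h <= y - x by lra.
  by near: h; apply: nbhs_right_le; rewrite subr_gt0.
Unshelve. all: by end_near.
Qed.

End StrictAtNonzeroDerivative.

Section TwoSidedPoint.
Variables (R : realType) (d : nat).
Implicit Types (S : set 'cV[R]_d) (p q : 'cV[R]_d).

Definition two_sided S p (i : 'I_d) := forall e, 0 < e ->
  (exists q, [/\ S q, ball p e q & p i ord0 < q i ord0]) /\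
  (exists q, [/\ S q, ball p e q & q i ord0 < p i ord0]).

Definition in_cell (m : nat) (k : {ffun 'I_d -> int}) p :=
  forall j, `|p j ord0 - (k j)%:~R / m%:R| < m%:R^-1.

Definition extremal_in_cell S p
    (c : nat * {ffun 'I_d -> int} * {ffun 'I_d -> bool}) :=
  let: (m, k, s) := c in
  [/\ S p, in_cell m k p & forall q, S q -> in_cell m k q ->
    forall i, if s i then q i ord0 <= p i ord0 else p i ord0 <= q i ord0].

Lemma extremal_in_cell_inj S p p' c :
  extremal_in_cell S p c -> extremal_in_cell S p' c -> p = p'.
Proof.
case: c => [[m k] s] [Sp pc pext] [Sp' pc' pext'].
apply/matrixP => i j; rewrite (ord1 j).
have := pext _ Sp' pc' i; have := pext' _ Sp pc i.
by case: (s i) => h1 h2; apply/eqP; rewrite eq_le h1 h2.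
Qed.

Lemma in_floor_cell (m : nat) p : (0 < m)%N ->
  in_cell m [ffun j => Num.floor (p j ord0 * m%:R)] p.
Proof.
move=> m0 j; rewrite ffunE; have m0' : 0 < (m%:R : R) by rewrite ltr0n.
have lo := floor_le (p j ord0 * m%:R); have := floorD1_gt (p j ord0 * m%:R).
rewrite intrD mulr1z => hi.
rewrite ger0_norm ?subr_ge0 ?ler_pdivrMr //.
rewrite -[X in X - _](mulfK (lt0r_neq0 m0')).
by rewrite -mulrBl ltr_pdivrMr // mulVf ?lt0r_neq0 //; lra.
Qed.

Lemma in_cell_ball (m : nat) k p q e : 0 < e -> 2 / e < m%:R ->
  in_cell m k p -> in_cell m k q -> ball p e q.
Proof.
move=> e0 me pc qc; split=> // j j'; rewrite (ord1 j').
have m0 : 0 < (m%:R : R) by apply: lt_trans me; rewrite divr_gt0.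
have : m%:R^-1 * 2 < e.
  by rewrite mulrC -ltr_pdivlMr ?invr_gt0 // invrK mulrC -ltr_pdivrMr.
have := pc j; have := qc j; set z := _ / _ => hq hp me'.
have := ler_distD z (p j ord0) (q j ord0); rewrite (distrC z) => h.
change (`|p j ord0 - q j ord0| < e); lra.
Qed.

Lemma one_sided_extremal_in_cell S p : S p -> (forall i, ~ two_sided S p i) ->
  exists c, extremal_in_cell S p c.
Proof.
move=> Sp one_sided.
have side i : exists b : bool, \forall q \near p,
    S q -> if b then q i ord0 <= p i ord0 else p i ord0 <= q i ord0.
  have /existsNP[e /not_implyP[e0 /not_andP[]]] := one_sided i.
    move=> /forallNP above; exists true.
    apply/nbhs_ballP; exists e => // q pq Sq.
    by rewrite leNgt; apply/negP => pq'; apply: (above q).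
  move=> /forallNP below; exists false.
  apply/nbhs_ballP; exists e => // q pq Sq.
  by rewrite leNgt; apply/negP => pq'; apply: (below q).
have [s sP] := choice side.
have [e /= e0 pe] := (nbhs_ballP _ _).1 (filter_forall _ sP).
pose m := Num.bound (2 / e).
have me : 2 / e < m%:R by apply: archi_boundP; rewrite divr_ge0 // ltW.
have m0 : (0 < m)%N by rewrite -(ltr0n R); apply: lt_trans me; rewrite divr_gt0.
exists (m, [ffun j => Num.floor (p j ord0 * m%:R)], finfun s).
split=> // [|q Sq qc i]; first exact: in_floor_cell.
rewrite ffunE; apply: (pe q _ i Sq).
exact: in_cell_ball e0 me (in_floor_cell p m0) qc.
Qed.

Lemma uncountable_two_sided S : ~ countable S ->
  exists p i, S p /\ two_sided S p i.
Proof.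
move=> nc; apply/not_existsP => no_two_sided; apply: nc.
have code p : exists c, S p -> extremal_in_cell S p c.
  have [Sp|nSp] := pselect (S p); last first.
    by exists (0%N, [ffun=> 0%Z], [ffun=> true]) => /nSp.
  have [|c pc] := one_sided_extremal_in_cell Sp; last by exists c.
  by move=> i two; apply: (no_two_sided p); exists i.
have [c cP] := choice code.
apply/countable_injP; exists (pickle \o c).
move=> p p' /[!inE] Sp Sp' /= /(pcan_inj pickleK) cpp'.
by apply: (extremal_in_cell_inj (cP p Sp)); rewrite cpp'; exact: cP.
Qed.

End TwoSidedPoint.

Section RealizationContinuous.
Variable R : realType.

Lemma continuous_sum (T : topologicalType) (I : Type) (r : seq I)
    (F : I -> T -> R) :
  (forall k, continuous (F k)) -> continuous (fun x => \sum_(k <- r) F k x).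
Proof.
move=> Fc; elim: r => [|k r IH].
  by under eq_fun do rewrite big_nil; exact: cst_continuous.
under eq_fun do rewrite big_cons.
by move=> x; apply: continuousD; [exact: Fc|exact: IH].
Qed.

Variables (N : nat -> nat) (L : nat) (rho : R -> R) (Phi : NN R N L).
Hypothesis rho_cont : continuous rho.

Lemma continuous_hidden (l : nat) (j : 'I_(N l)) :
  continuous (fun x => nn_hidden rho Phi x l j ord0).
Proof.
elim: l j => [|l IH] j /=; first exact: coord_continuous.
under eq_fun do rewrite mxE !mxE.
move=> x; apply: continuous_comp; last exact: rho_cont.
apply: continuousD; last exact: cst_continuous.
apply: continuous_sum => k y; apply: continuousM; first exact: cst_continuous.
exact: IH.
Qed.

Lemma continuous_realization : continuous (realization rho Phi).
Proof.
rewrite /realization; under eq_fun do rewrite mxE.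
move=> x; apply: continuousD; last exact: cst_continuous.
apply: continuous_sum => k y; apply: continuousM; first exact: cst_continuous.
exact: continuous_hidden.
Qed.

End RealizationContinuous.

Lemma continuous_measurable_Rd (R : realType) (d : nat) (g : 'cV[R]_d -> R) :
  continuous g -> measurable_fun (setT : set (Rd R d)) g.
Proof.
move=> /continuousP gc.
apply: (@measurability _ _ _ _ _ _ _
  (measurable_realfun.RGenOpens.measurableE R)).
move=> _ [_ [a [b ->] <-]]; rewrite setTI; apply: sub_sigma_algebra.
exact/gc/interval_open.
Qed.

Section LpConvergence.
Variables (R : realType) (dT : measure_display) (T : measurableType dT).
Variable mu : {measure set T -> \bar R}.

Lemma cvg_norm_bound (u : nat -> R) (l M : R) :
  u @ \oo --> l -> (forall n, `|u n| <= M) -> `|l| <= M.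
Proof.
move=> ul uM; rewrite leNgt; apply/negP => /(cvgr_norm_gt _ ul) /filter_ex[n].
by rewrite ltNge uM.
Qed.

Lemma cvg_powR_norm0 (u : nat -> R) (p : R) :
  0 < p -> u @ \oo --> 0 -> `|u n| `^ p @[n --> \oo] --> 0.
Proof.
move=> p0 /cvgr0_norm_lt u0; apply/cvgr0Pnorm_lt => e e0.
have ep0 : 0 < e `^ p^-1 by apply: powR_gt0.
apply: filterS (u0 _ ep0) => n un.
rewrite ger0_norm ?powR_ge0 //.
have -> : e = (e `^ p^-1) `^ p.
  by rewrite -powRrM mulVf ?gt_eqF // powRr1 // ltW.
by apply: gt0_ltr_powR; rewrite ?nnegrE ?powR_ge0.
Qed.

Lemma bounded_cvg_Lp (g : nat -> T -> R) (f : T -> R) (M p : R) :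
  (forall n, measurable_fun setT (g n)) -> (forall x, g ^~ x @ \oo --> f x) ->
  (forall n x, `|g n x| <= M) -> (mu setT < +oo)%E -> 0 < p ->
  (\int[mu]_x (`|g n x - f x| `^ p)%:E)%E @[n --> \oo] --> 0%E.
Proof.
move=> gm gf gM mufin p0.
have fM x : `|f x| <= M by exact: cvg_norm_bound (gf x) (gM ^~ x).
have fm : measurable_fun setT f.
  by apply: (measurable_realfun.measurable_fun_cvg gm) => x _; exact: gf.
have M0 : 0 <= M by rewrite (le_trans _ (fM point)).
pose C := ((M + M) `^ p)%:E.
rewrite -(integral0 mu setT); apply: (@dominated_cvg _ _ _ mu setT measurableT
  (fun n x => (`|g n x - f x| `^ p)%:E) (cst 0%E) (cst C)) => //.
- move=> n; apply/measurable_realfun.measurable_EFinP.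
  apply: measurableT_comp (measurable_realfun.measurable_powR p) _.
  by apply: measurableT_comp => //; exact: measurable_realfun.measurable_funB.
- move=> x _; apply: cvg_EFin; first exact: nearW.
  apply: cvg_powR_norm0 p0 _; apply/cvgr0Pnorm_lt => e e0.
  by apply: filterS (cvgr_dist_lt _ _ (gf x) _ e0) => n; rewrite distrC.
- apply/integrableP; split; first exact: measurable_cst.
  rewrite integral_cst //= ger0_norm ?powR_ge0 //.
  by rewrite lte_mul_pinfty // lee_fin powR_ge0.
- move=> n x _; rewrite /= ger0_norm ?powR_ge0 // lee_fin.
  apply: ge0_ler_powR; rewrite ?nnegrE ?addr_ge0 //; first exact: ltW.
  by rewrite (le_trans (ler_normB _ _)) // lerD.
Qed.

End LpConvergence.

Section NoContinuousRepresentative.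
Variables (R : realType) (d : nat) (mu : {measure set (Rd R d) -> \bar R}).

Lemma ae_exists_near_support (P : 'cV[R]_d -> Prop) (U : set 'cV[R]_d) q :
  {ae mu, forall x, P x} -> open U -> U q -> msupport mu q ->
  exists2 y, U y & P y.
Proof.
move=> [Z [mZ muZ0 notPZ]] oU Uq suppq.
have [//|noPU] := pselect (exists2 y, U y & P y).
have UZ : U `<=` Z by move=> y Uy; apply: notPZ => /= Py; apply: noPU; exists y.
have : (mu U <= mu Z)%E.
  by apply: le_measure; rewrite ?inE //; exact: sub_sigma_algebra.
by rewrite muZ0 => muU0; have := suppq U oU Uq; rewrite ltNge muU0.
Qed.

Lemma open_coord_gt (i : 'I_d) (c : R) : open [set y : 'cV[R]_d | c < y i ord0].
Proof.
exact: (continuousP _).1 (@coord_continuous R d 1 i ord0) _ (@open_gt R c).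
Qed.

Lemma open_coord_lt (i : 'I_d) (c : R) : open [set y : 'cV[R]_d | y i ord0 < c].
Proof.
exact: (continuousP _).1 (@coord_continuous R d 1 i ord0) _ (@open_lt R c).
Qed.

Lemma jump_not_ae_continuous (f h : 'cV[R]_d -> R) (p : 'cV[R]_d) (i : 'I_d)
    (l l' : R) :
  continuous h -> l != l' ->
  (forall x : 'cV[R]_d, p i ord0 < x i ord0 -> f x = l) ->
  (forall x : 'cV[R]_d, x i ord0 < p i ord0 -> f x = l') ->
  two_sided (msupport mu) p i -> ~ {ae mu, forall x, f x = h x}.
Proof.
move=> hc ll' fl fl' two fh.
have e0 : 0 < `|l - l'| / 2 by rewrite divr_gt0 // normr_gt0 subr_eq0.
have [e /= ep hp] := (nbhs_ballP _ _).1 (cvgr_dist_lt _ _ (hc p) _ e0).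
have [[q1 [supp1 pq1 above1]] [q2 [supp2 pq2 below2]]] := two e ep.
have [y1 [py1 above] fy1] := ae_exists_near_support fh
  (openI (ball_open p e) (@open_coord_gt i (p i ord0))) (conj pq1 above1) supp1.
have [y2 [py2 below] fy2] := ae_exists_near_support fh
  (openI (ball_open p e) (@open_coord_lt i (p i ord0))) (conj pq2 below2) supp2.
have := hp _ py1; have := hp _ py2.
rewrite -fy1 -fy2 (fl y1 above) (fl' y2 below) => hl' hl.
by have := ler_distD (h p) l l'; rewrite (distrC l (h p)); lra.
Qed.

End NoContinuousRepresentative.

Section StepProfile.
Variable R : realType.
Implicit Types (H : R -> R) (l t : R).

Definition step_profile H l (l' : R) :=
  [/\ H x @[x --> +oo] --> l, H x @[x --> -oo] --> l', l != l'
    & exists M, forall v, `|H v| <= M].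

Definition scaled_limit H l (l' : R) t :=
  if 0 < t then l else if t < 0 then l' else H 0.

Lemma scaled_limit_gt0 H l (l' : R) t : 0 < t -> scaled_limit H l l' t = l.
Proof. by rewrite /scaled_limit => ->. Qed.

Lemma scaled_limit_lt0 H l (l' : R) t : t < 0 -> scaled_limit H l l' t = l'.
Proof. by rewrite /scaled_limit => t0; rewrite ltNge (ltW t0) t0. Qed.

Lemma cvg_scaled_limit H l (l' : R) t :
  H x @[x --> +oo] --> l -> H x @[x --> -oo] --> l' ->
  H (n%:R * t) @[n --> \oo] --> scaled_limit H l l' t.
Proof.
move=> Hl Hl'; rewrite /scaled_limit.
have [t0|t0|<-] := ltgtP 0 t.
- apply: cvg_comp Hl; apply/cvgryPge => A; near=> n.
  by rewrite -ler_pdivrMr //; near: n; exact: nbhs_infty_ger.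
- apply: cvg_comp Hl'; apply/cvgrNyPle => A; near=> n.
  rewrite -lerN2 -mulrN -ler_pdivrMr ?oppr_gt0 //.
  by near: n; exact: nbhs_infty_ger.
- by under eq_fun do rewrite mulr0; exact: cvg_cst.
Unshelve. all: by end_near.
Qed.

Lemma bounded_nondecreasing_step_profile (rho : R -> R) (x0 : R) :
  {homo rho : x y / x <= y} -> strict_at rho x0 ->
  (exists M, forall x, `|rho x| <= M) -> exists l l', step_profile rho l l'.
Proof.
move=> mon [lt_x0 gt_x0] [M rhoM].
have rhoM' x : - M <= rho x <= M by rewrite -ler_norml.
pose rhoN x := - rho (- x).
have ub_rho : has_ubound (range rho).
  by exists M => _ [x _ <-]; case/andP: (rhoM' x).
have ub_rhoN : has_ubound (range rhoN).
  by exists M => _ [x _ <-]; rewrite /rhoN lerNl; case/andP: (rhoM' (- x)).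
exists (sup (range rho)), (- sup (range rhoN)); split.
- exact: nondecreasing_cvgr.
- apply/cvgNy_compNP.
  have -> : rho \o -%R = (fun x => - rhoN x).
    by apply/funext => x; rewrite /rhoN opprK.
  apply: cvgN; apply: nondecreasing_cvgr => // x y xy.
  by rewrite /rhoN lerN2 mon // lerN2.
- have le_sup : rho (x0 + 1) <= sup (range rho).
    by apply: ub_le_sup => //; exists (x0 + 1).
  have le_supN : rhoN (1 - x0) <= sup (range rhoN).
    by apply: ub_le_sup => //; exists (1 - x0).
  rewrite /rhoN opprB in le_supN.
  have : rho (x0 - 1) < rho x0 by apply: lt_x0; lra.
  have : rho x0 < rho (x0 + 1) by apply: gt_x0; lra.
  by move=> *; apply/negbT/gt_eqF; lra.
- by exists M.
Qed.

Section Increment.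
Variables (rho : R -> R) (r : R).
Hypotheses (rho_mon : {homo rho : x y / x <= y}) (rho_cont : continuous rho).
Hypothesis rho_derivable : forall x, r < `|x| -> derivable rho x 1.

Definition increment v := rho (v + 1) - rho v.

Lemma increment_mvt v : r < v \/ v + 1 < - r ->
  exists2 xi, v < xi < v + 1 & increment v = derive1 rho xi.
Proof.
move=> vr; have [|x||xi] := @MVT R rho (derive1 rho) v (v + 1); first lra.
- rewrite in_itv /= => /andP[vx xv]; rewrite derive1E; apply/derivableP.
  apply: rho_derivable; have := ler_norm x; have := ler_norm (- x).
  by rewrite normrN; lra.
- exact: continuous_subspaceT.
rewrite in_itv /= => vxi Dxi; exists xi => //.
by rewrite /increment Dxi addrAC subrr add0r mulr1.
Qed.

Lemma increment_cvgy (lam : R) : derive1 rho x @[x --> +oo] --> lam ->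
  increment v @[v --> +oo] --> lam.
Proof.
move=> /cvgrPdist_lt rho'lam; apply/cvgrPdist_lt => e e0.
have [K [_ HK]] := rho'lam e e0.
near=> v; have [|xi /andP[vxi _] ->] := @increment_mvt v; last first.
  apply/HK/(le_lt_trans _ vxi).
  by near: v; apply: nbhs_pinfty_ge; exact: num_real.
by left; near: v; apply: nbhs_pinfty_gt; exact: num_real.
Unshelve. all: by end_near.
Qed.

Lemma increment_cvgNy (lam : R) : derive1 rho x @[x --> -oo] --> lam ->
  increment v @[v --> -oo] --> lam.
Proof.
move=> /cvgrPdist_lt rho'lam; apply/cvgrPdist_lt => e e0.
have [K [_ HK]] := rho'lam e e0.
near=> v; have [|xi /andP[_ xiv] ->] := @increment_mvt v; last first.
  apply/HK/(lt_le_trans xiv); suff : v <= K - 1 by lra.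
  by near: v; apply: nbhs_ninfty_le; exact: num_real.
right; suff : v < - r - 1 by lra.
by near: v; apply: nbhs_ninfty_lt; exact: num_real.
Unshelve. all: by end_near.
Qed.

Lemma increment_bounded (lam lam' : R) :
  increment v @[v --> +oo] --> lam -> increment v @[v --> -oo] --> lam' ->
  exists M, forall v, `|increment v| <= M.
Proof.
move=> Dlam Dlam'.
have [K1 [_ HK1]] := cvgr_norm_le _ Dlam (`|lam| + 1) ltac:(by rewrite ltrDl).
have [K2 [_ HK2]] := cvgr_norm_le _ Dlam' (`|lam'| + 1) ltac:(by rewrite ltrDl).
exists (`|lam| + 1 + (`|lam'| + 1) + `|rho (K1 + 1) - rho K2|) => v.
have D0 : 0 <= increment v by rewrite subr_ge0 rho_mon // lerDl.
rewrite ger0_norm //; have := ler_norm (rho (K1 + 1) - rho K2).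
have := normr_ge0 (rho (K1 + 1) - rho K2).
have := normr_ge0 lam; have := normr_ge0 lam'.
have [K1v|vK1] := ltP K1 v.
  by have := HK1 _ K1v; rewrite ger0_norm //; lra.
have [vK2|K2v] := ltP v K2.
  by have := HK2 _ vK2; rewrite ger0_norm //; lra.
have : rho (v + 1) <= rho (K1 + 1) by apply: rho_mon; lra.
by have := rho_mon K2v; rewrite /increment; lra.
Qed.

Lemma increment_step_profile (lam lam' : R) : lam != lam' ->
  derive1 rho x @[x --> +oo] --> lam -> derive1 rho x @[x --> -oo] --> lam' ->
  step_profile increment lam lam'.
Proof.
move=> ll' /increment_cvgy Dlam /increment_cvgNy Dlam'.
by split=> //; exact: increment_bounded Dlam Dlam'.
Qed.

End Increment.

Definition last_layer (m : nat) (rho : R -> R) (co : 'I_m -> R) (v : R) :=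
  \sum_(k < m) co k * rho (v + (val k == 1%N)%:R).

Lemma sum_ord_indicator (m : nat) (F : 'I_m -> R) (k0 : 'I_m) (a : nat) :
  val k0 = a -> \sum_(k < m) ((val k == a)%:R * F k) = F k0.
Proof.
move=> <-; rewrite (bigD1 k0) //= eqxx mul1r big1 ?addr0 // => k kk0.
by rewrite (inj_eq val_inj) (negbTE kk0) mul0r.
Qed.

Lemma last_layer_step_profile (m : nat) (rho : R -> R) (x0 r : R) :
  {homo rho : x y / x <= y} -> continuous rho -> strict_at rho x0 ->
  (forall x, r < `|x| -> derivable rho x 1) -> (0 < m)%N ->
  ((exists lam lam' : R, 0 <= lam /\ 0 <= lam' /\ lam != lam' /\
       (derive1 rho x @[x --> +oo] --> lam) /\
       (derive1 rho x @[x --> -oo] --> lam') /\ (2 <= m)%N)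
   \/ (exists M : R, forall x : R, `|rho x| <= M)) ->
  exists (co : 'I_m -> R) l l', step_profile (last_layer rho co) l l'.
Proof.
move=> mon rc strict rho'r m0.
case=> [[lam [lam' [_ [_ [ll' [rho'lam [rho'lam' m1]]]]]]]|bnd].
  pose co (k : 'I_m) : R := (val k == 1%N)%:R - (val k == 0%N)%:R.
  exists co, lam, lam'.
  suff -> : last_layer rho co = increment rho.
    by apply: (increment_step_profile mon rc rho'r ll').
  apply/funext => v; rewrite /last_layer; under eq_bigr do rewrite mulrBl.
  rewrite sumrB (sum_ord_indicator _ (_ : val (Ordinal m1) = 1%N)) //.
  by rewrite (sum_ord_indicator _ (_ : val (Ordinal m0) = 0%N)) //= addr0.
pose co (k : 'I_m) : R := (val k == 0%N)%:R.
exists co; suff -> : last_layer rho co = rho.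
  exact: bounded_nondecreasing_step_profile mon strict bnd.
apply/funext => v; rewrite /last_layer.
by rewrite (sum_ord_indicator _ (_ : val (Ordinal m0) = 0%N)) //= addr0.
Qed.

End StepProfile.

Section AmplifierNet.
Variables (R : realType) (N : nat -> nat) (L' : nat) (rho : R -> R).
Variables (i : 'I_(N 0%N)) (c x0 : R) (co : 'I_(N L'.+1) -> R).
Hypothesis N_gt0 : forall l, (l <= L'.+1)%N -> (0 < N l)%N.

Definition threshold (l : nat) : R := if l == 0%N then c else rho x0.
Definition gain (n l : nat) : R := if l == L' then n%:R else 1.
Definition source (l : nat) : nat := if l == 0%N then val i else 0%N.
Definition offset (l j : nat) : R := if l == L' then (j == 1%N)%:R else x0.

Definition amplifier_weights (n l : nat) : 'M[R]_(N l.+1, N l) :=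
  \matrix_(j, k) (((k : nat) == source l)%:R * gain n l).
Definition amplifier_biases (n l : nat) : 'cV[R]_(N l.+1) :=
  \col_j (offset l j - gain n l * threshold l).
Definition amplifier_net (n : nat) : NN R N L'.+2 :=
  @mkNN R N L'.+2 (amplifier_weights n) (amplifier_biases n) (\row_k co k) 0.

Fixpoint signal (l : nat) (x : 'cV[R]_(N 0%N)) : R :=
  if l is l'.+1 then rho (signal l' x - threshold l' + x0) else x i ord0.

Lemma signal_sign (x : 'cV[R]_(N 0%N)) (l : nat) : strict_at rho x0 ->
  (c < x i ord0 -> threshold l < signal l x) /\
  (x i ord0 < c -> signal l x < threshold l).
Proof.
move=> [lt_x0 gt_x0]; elim: l => [//|l [IHgt IHlt]] /=.
split=> xc; [apply: gt_x0; have := IHgt xc|apply: lt_x0; have := IHlt xc].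
  all: lra.
Qed.

Lemma exists_source (l : nat) :
  (l <= L'.+1)%N -> exists k : 'I_(N l), val k = source l.
Proof.
rewrite /source; case: l => [|l] lL /=; first by exists i.
by exists (Ordinal (N_gt0 lL)).
Qed.

Lemma amplifier_layer (n l : nat) (x : 'cV[R]_(N 0%N)) (j : 'I_(N l.+1)) :
  (l <= L')%N ->
  (forall k : 'I_(N l), val k = source l ->
    nn_hidden rho (amplifier_net n) x l k ord0 = signal l x) ->
  nn_hidden rho (amplifier_net n) x l.+1 j ord0 =
    rho (gain n l * (signal l x - threshold l) + offset l j).
Proof.
move=> lL IH; rewrite /= !mxE; congr (rho _).
have [k0 k0src] := exists_source (leq_trans lL (leqnSn _)).
under eq_bigr do rewrite !mxE -mulrA.
by rewrite (sum_ord_indicator _ k0src) IH // mulrBr addrAC addrA.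
Qed.

Lemma hidden_source (n l : nat) (x : 'cV[R]_(N 0%N)) : (l <= L')%N ->
  forall k : 'I_(N l), val k = source l ->
    nn_hidden rho (amplifier_net n) x l k ord0 = signal l x.
Proof.
elim: l => [|l IH] lL k ksrc /=; first by congr (x _ _); apply: val_inj.
rewrite -/(nn_hidden _ _ _ l.+1) amplifier_layer ?(ltnW lL) //.
  by rewrite /gain /offset ltn_eqF // mul1r.
exact/IH/ltnW.
Qed.

Lemma realization_amplifier_net (n : nat) (x : 'cV[R]_(N 0%N)) :
  realization rho (amplifier_net n) x =
    last_layer rho co (n%:R * (signal L' x - threshold L')).
Proof.
rewrite /realization /= addr0 mxE; apply: eq_bigr => k _.
rewrite mxE -/(nn_hidden _ _ _ L'.+1) amplifier_layer //.
  by rewrite /gain /offset eqxx.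
exact: hidden_source.
Qed.

End AmplifierNet.

Theorem theorem3p1 (R : realType) (L : nat) (N : nat -> nat) (rho : R -> R)
    (B : R) (mu : {measure set (Rd R (N 0%N)) -> \bar R}) :
  (2 <= L)%N ->
  (forall l : nat, (l <= L.-1)%N -> (0 < N l)%N) ->
  (* (i) *)
  continuous rho ->
  {homo rho : x y / x <= y} ->
  (* (ii) *)
  (exists x0 : R, derivable rho x0 1 /\ derive1 rho x0 != 0) ->
  (* (iii) *)
  (exists r : R, 0 < r /\ forall x : R, r < `|x| -> derivable rho x 1) ->
  (* (iv) *)
  ((exists lam lam' : R, 0 <= lam /\ 0 <= lam' /\ lam != lam' /\
       (derive1 rho x @[x --> +oo] --> lam) /\
       (derive1 rho x @[x --> -oo] --> lam') /\ (2 <= N L.-1)%N)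
   \/ (exists M : R, forall x : R, `|rho x| <= M)) ->
  0 < B ->
  (* mu is a finite Borel measure on [-B,B]^d *)
  (mu setT < +oo)%E ->
  mu (~` @cube R (N 0%N) B) = 0%E ->
  (* supp mu is uncountable *)
  ~ countable (msupport mu) ->
  exists f : Rd R (N 0%N) -> R,
    [/\ in_Linfty mu f,
        (forall p : R, 0 < p -> in_Lp_closure_RNN L rho mu p f)
      & ~ in_RNN L rho mu f].
Proof.
move=> L2 N_gt0 rc mon [x0 [rho'x0 rho'x0_neq0]] [r [_ rho'r]] iv _ mufin _ unc.
case: L L2 N_gt0 iv => [|[|L']] // _ N_gt0 iv.
have [p [i [_ two]]] := uncountable_two_sided unc.
have strict := nondecreasing_strict_at mon rho'x0 rho'x0_neq0.
have [co [l [l' [Hl Hl' ll' [M HM]]]]] :=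
  last_layer_step_profile mon rc strict rho'r (N_gt0 _ (leqnn _)) iv.
pose t x := signal rho i (p i ord0) x0 L' x - threshold rho (p i ord0) x0 L'.
pose Phi n := amplifier_net rho i (p i ord0) x0 co n.
pose g n : Rd R (N 0%N) -> R := realization rho (Phi n).
have gE n x : g n x = last_layer rho co (n%:R * t x).
  exact: realization_amplifier_net.
pose f (x : Rd R (N 0%N)) := scaled_limit (last_layer rho co) l l' (t x).
have gf x : g ^~ x @ \oo --> f x.
  by under eq_fun do rewrite gE; exact: cvg_scaled_limit.
have gm n : measurable_fun setT (g n).
  exact: continuous_measurable_Rd (continuous_realization rc).
have gM n x : `|g n x| <= M by rewrite gE.
exists f; split.
- split; first exact: measurable_realfun.measurable_fun_cvg gm _.
  by exists M; apply: aeW => x; exact: cvg_norm_bound (gf x) (gM ^~ x).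
- by move=> q q0; exists Phi; exact: bounded_cvg_Lp gm gf gM mufin q0.
- move=> [Psi fPsi].
  apply: jump_not_ae_continuous (continuous_realization (Phi := Psi) rc) ll'
    _ _ two fPsi.
  + move=> x /(signal_sign i _ x L' strict).1 tx.
    by rewrite /f scaled_limit_gt0 // subr_gt0.
  + move=> x /(signal_sign i _ x L' strict).2 tx.
    by rewrite /f scaled_limit_lt0 // subr_lt0.
Qed.
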